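(* Let $n\ge3$ and $L>1$, and define $$\sigma_{1,2}=\frac{(L+n-1)+L^n(1+L(n-1))+\sqrt{\left((L+n-1)+L^n(1+L(n-1))\right)^2-4L(L^n-1)^2(n-1)}}{2L(L^n-1)},$$ $$\sigma_{2,1}=\frac{L^{n+2}(2+Ln)+(n+2L)-\sqrt{\left(L^{n+2}(2+Ln)+(n+2L)\right)^2-8Ln(L^{n+2}-1)^2}}{2L(L^{n+2}-1)}.$$ Then $\sigma_{2,1}\le\sigma_{1,2}$. *)

From Stdlib Require Import Reals.
Open Scope R_scope.

Definition sigma12 (n : nat) (L : R) : R :=
  let a := (L + INR n - 1) + L ^ n * (1 + L * (INR n - 1)) in
  (a + sqrt (a ^ 2 - 4 * L * (L ^ n - 1) ^ 2 * (INR n - 1)))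
  / (2 * L * (L ^ n - 1)).

Definition sigma21 (n : nat) (L : R) : R :=
  let b := L ^ (n + 2) * (2 + L * INR n) + (INR n + 2 * L) in
  (b - sqrt (b ^ 2 - 8 * L * INR n * (L ^ (n + 2) - 1) ^ 2))
  / (2 * L * (L ^ (n + 2) - 1)).

(* [sigma21] and [sigma12] are the smaller, resp. larger, root of quadratics
   [A s^2 - b s + c] with [A > 0], and each quadratic is negative at [s = 2]:
   hence [sigma21 <= 2 <= sigma12]. *)

From Stdlib Require Import Reals Lra Lia Psatz.
Open Scope R_scope.

Lemma le_sqrt_of_sqr_le (u D : R) : u ^ 2 <= D -> u <= sqrt D.
Proof.
  intros HuD. apply Rle_trans with (Rabs u); [apply Rle_abs|].
  rewrite <- sqrt_Rsqr_abs. apply sqrt_le_1_alt. unfold Rsqr. lra.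
Qed.

(* [D - (b - 2 A r)^2 = -4 A (A r^2 - b r + c)], so a point where the quadratic
   is nonpositive lies within [sqrt D / (2 A)] of the vertex [b / (2 A)]. *)
Lemma quadratic_lower_root_le (A b c r : R) :
  0 < A -> A * r ^ 2 - b * r + c <= 0 ->
  (b - sqrt (b ^ 2 - 4 * A * c)) / (2 * A) <= r.
Proof.
  intros HA Hr.
  assert (Hs : b - 2 * A * r <= sqrt (b ^ 2 - 4 * A * c))
    by (apply le_sqrt_of_sqr_le; nra).
  apply (Rmult_le_reg_r (2 * A)); [lra|].
  unfold Rdiv. rewrite Rmult_assoc, Rinv_l; lra.
Qed.

Lemma quadratic_upper_root_ge (A b c r : R) :
  0 < A -> A * r ^ 2 - b * r + c <= 0 ->
  r <= (b + sqrt (b ^ 2 - 4 * A * c)) / (2 * A).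
Proof.
  intros HA Hr.
  assert (Hs : 2 * A * r - b <= sqrt (b ^ 2 - 4 * A * c))
    by (apply le_sqrt_of_sqr_le; nra).
  apply (Rmult_le_reg_r (2 * A)); [lra|].
  unfold Rdiv. rewrite Rmult_assoc, Rinv_l; lra.
Qed.

Lemma sigma21_le_2 (n : nat) (L : R) : (2 <= n)%nat -> 1 < L -> sigma21 n L <= 2.
Proof.
  intros Hn HL. unfold sigma21. cbv zeta.
  assert (HN : 2 <= INR n)
    by (replace 2 with (INR 2) by (simpl; lra); apply le_INR; lia).
  assert (Hy : 1 < L ^ (n + 2)) by (apply Rlt_pow_R1; [lra|lia]).
  set (N := INR n) in *. set (y := L ^ (n + 2)) in *.
  replace (2 * L * (y - 1)) with (2 * (L * (y - 1))) by ring.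
  replace (8 * L * N * (y - 1) ^ 2) with (4 * (L * (y - 1)) * (2 * N * (y - 1)))
    by ring.
  apply quadratic_lower_root_le; [nra|].
  assert (Hpos : 0 <= (y - 1) * (2 * L - 2) * (N - 2))
    by (apply Rmult_le_pos; [apply Rmult_le_pos|]; lra).
  replace (L * (y - 1) * 2 ^ 2 - (y * (2 + L * N) + (N + 2 * L)) * 2 + 2 * N * (y - 1))
    with (- ((y - 1) * (2 * L - 2) * (N - 2)) - 2 * (L + 1) * (N + 2)) by ring.
  nra.
Qed.

Lemma sigma12_ge_2 (n : nat) (L : R) : (3 <= n)%nat -> 1 < L -> 2 <= sigma12 n L.
Proof.
  intros Hn HL. unfold sigma12. cbv zeta.
  assert (HN : 3 <= INR n)
    by (replace 3 with (INR 3) by (simpl; lra); apply le_INR; lia).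
  assert (Hx : 1 < L ^ n) by (apply Rlt_pow_R1; [lra|lia]).
  set (N := INR n) in *. set (x := L ^ n) in *.
  replace (2 * L * (x - 1)) with (2 * (L * (x - 1))) by ring.
  replace (4 * L * (x - 1) ^ 2 * (N - 1)) with (4 * (L * (x - 1)) * ((x - 1) * (N - 1)))
    by ring.
  apply quadratic_upper_root_ge; [nra|].
  assert (Hpos : 0 <= (x - 1) * (2 * L - 1) * (N - 3))
    by (apply Rmult_le_pos; [apply Rmult_le_pos|]; lra).
  replace (L * (x - 1) * 2 ^ 2 - (L + N - 1 + x * (1 + L * (N - 1))) * 2
           + (x - 1) * (N - 1))
    with (- ((x - 1) * (2 * L - 1) * (N - 3)) - 2 * N * (L + 1)) by ring.
  nra.
Qed.

Theorem lemma2p5 (n : nat) (L : R) (Hn : (3 <= n)%nat) (HL : 1 < L) :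
  sigma21 n L <= sigma12 n L.
Proof.
  apply Rle_trans with 2.
  - apply sigma21_le_2; [lia | exact HL].
  - apply sigma12_ge_2; assumption.
Qed.
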